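(* Let $u:(0,\infty)\to(0,\infty)$ be a stable function bounded from above by some $u^\infty>0$. For every $x>0$ the equation $\eta=\frac{1}{\frac1x+u(\eta)}$, $\eta>0$, admits a unique solution, denoted $\eta(x)$, and the resulting mapping $\eta:(0,\infty)\to(0,\infty)$ is stable.
   Context: A function $f:(0,\infty)\to(0,\infty)$ is stable if $|f(x)-f(y)|\le\sqrt{\frac{f(x)f(y)}{xy}}|x-y|$ for all $x,y>0$. *)

(* concrete reals R. Functions (0,oo)->(0,oo) are modeled as
   f : R -> R together with positivity on (0,oo); values outside (0,oo) are irrelevant. *)
From Stdlib Require Import Reals Lra.
Open Scope R_scope.

Definition pos_fun (f : R -> R) : Prop :=
  forall x, 0 < x -> 0 < f x.

Definition stable (f : R -> R) : Prop :=
  pos_fun f /\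
  forall x y, 0 < x -> 0 < y ->
    Rabs (f x - f y) <= sqrt (f x * f y / (x * y)) * Rabs (x - y).

(* Squaring the defining inequality shows that a positive f is stable iff
   (x f x - y f y) (y f x - x f y) <= 0, i.e. iff x f(x) is nondecreasing and
   f(x) / x is nonincreasing; in particular a stable u is continuous.  Since
   e u(e) is nondecreasing, e + x e u(e) is continuous and strictly increasing,
   so the fixed-point equation, equivalent to e + x e u(e) = x, has exactly one
   positive root; the bound on u makes the left side smaller than x near 0.
   Finally eta(x) / x = 1 - eta u(eta), so the monotonicity of e u(e) shows
   that eta is nondecreasing and eta(x) / x nonincreasing: eta is stable. *)

From Stdlib Require Import Reals Lra Ranalysis5 ClassicalEpsilon.
Open Scope R_scope.

Definition stable_monotone (f : R -> R) : Prop :=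
  forall x y, 0 < y -> y <= x -> y * f y <= x * f x /\ y * f x <= x * f y.

Lemma stable_ineq_iff_prod_nonpos A B x y :
  0 < A -> 0 < B -> 0 < x -> 0 < y ->
  Rabs (A - B) <= sqrt (A * B / (x * y)) * Rabs (x - y) <->
  (x * A - y * B) * (y * A - x * B) <= 0.
Proof.
  intros hA hB hx hy.
  assert (hxy : 0 < x * y) by nra.
  assert (hs : 0 <= A * B / (x * y)) by (apply Rlt_le, Rdiv_lt_0_compat; nra).
  assert (hsq : (sqrt (A * B / (x * y)) * (x - y))² * (x * y) = A * B * (x - y)²).
  { rewrite Rsqr_mult, Rsqr_sqrt by exact hs. field. lra. }
  rewrite <- (Rabs_pos_eq (sqrt _)) at 1 by apply sqrt_pos.
  rewrite <- Rabs_mult.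
  assert (hid : (x * A - y * B) * (y * A - x * B) = (A - B)² * (x * y) - A * B * (x - y)²).
  { unfold Rsqr. ring. }
  rewrite hid, <- hsq.
  split.
  - intros h. apply Rsqr_le_abs_1 in h. nra.
  - intros h. apply Rsqr_le_abs_0. apply (Rmult_le_reg_r (x * y)); lra.
Qed.

Lemma prod_nonpos_iff A B x y :
  0 < A -> 0 < B -> 0 < y -> y <= x ->
  (x * A - y * B) * (y * A - x * B) <= 0 <-> y * B <= x * A /\ y * A <= x * B.
Proof.
  intros hA hB hy hyx. split.
  - intros h. split.
    + destruct (Rle_lt_dec (y * B) (x * A)) as [hle|hlt]; [exact hle|].
      assert (x * B <= y * A) by nra.
      nra.
    + destruct (Rle_lt_dec (y * A) (x * B)) as [hle|hlt]; [exact hle|].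
      assert (x * A <= y * B) by nra.
      nra.
  - intros [h1 h2]. nra.
Qed.

Lemma stable_iff (f : R -> R) : stable f <-> pos_fun f /\ stable_monotone f.
Proof.
  split.
  - intros [hpos hs]. split; [exact hpos|].
    intros x y hy hyx.
    assert (hx : 0 < x) by lra.
    apply prod_nonpos_iff; auto.
    apply stable_ineq_iff_prod_nonpos; auto.
  - intros [hpos hm]. split; [exact hpos|].
    intros x y hx hy.
    apply stable_ineq_iff_prod_nonpos; auto.
    destruct (Rle_lt_dec y x) as [hyx|hxy].
    + apply prod_nonpos_iff; try apply hm; auto.
    +
      replace ((x * f x - y * f y) * (y * f x - x * f y))
        with ((y * f y - x * f x) * (x * f y - y * f x)) by ring.
      apply prod_nonpos_iff; try apply hm; auto; lra.
Qed.

Lemma stable_monotone_local_bound f a e :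
  pos_fun f -> stable_monotone f -> 0 < a -> Rabs (e - a) <= a / 2 ->
  a * Rabs (f e - f a) <= 4 * f a * Rabs (e - a).
Proof.
  intros hpos hm ha hea.
  assert (he : a / 2 <= e <= 3 * a / 2).
  { pose proof (Rle_abs (e - a)) as h1. pose proof (Rle_abs (a - e)) as h2.
    rewrite Rabs_minus_sym in h2. lra. }
  assert (hfa := hpos a ha). assert (hfe := hpos e ltac:(lra)).
  rewrite <- (Rabs_pos_eq a) at 1 by lra. rewrite <- Rabs_mult.
  destruct (Rle_lt_dec a e) as [hae|hea'].
  - destruct (hm e a ha hae) as [h1 h2].
    rewrite (Rabs_pos_eq (e - a)) by lra.
    apply Rabs_le; split; nra.
  - destruct (hm a e ltac:(lra) (Rlt_le _ _ hea')) as [h1 h2].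
    rewrite (Rabs_left (e - a)) by lra.
    apply Rabs_le; split; nra.
Qed.

Lemma stable_monotone_continuous f a :
  pos_fun f -> stable_monotone f -> 0 < a -> continuity_pt f a.
Proof.
  intros hpos hm ha eps heps.
  assert (hfa := hpos a ha).
  set (d := Rmin (a / 2) (eps * a / (4 * f a))).
  assert (hd0 : 0 < d) by (apply Rmin_pos; [lra | apply Rdiv_lt_0_compat; nra]).
  assert (hd1 : d <= a / 2) by apply Rmin_l.
  assert (hd2 : d * (4 * f a) <= eps * a).
  { apply Rle_trans with (eps * a / (4 * f a) * (4 * f a)).
    - apply Rmult_le_compat_r; [lra | apply Rmin_r].
    - right; field; lra. }
  exists d. split; [exact hd0|].
  intros e [_ hed]. simpl in *. unfold R_dist in *.
  assert (hb := stable_monotone_local_bound f a e hpos hm ha ltac:(lra)).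
  apply (Rmult_lt_reg_l a); [exact ha|].
  nra.
Qed.

Section Resolvent.

Variables (u : R -> R) (u_sup : R).
Hypothesis u_pos : pos_fun u.
Hypothesis u_mono : stable_monotone u.
Hypothesis u_bounded : forall x, 0 < x -> u x <= u_sup.

Definition solves (x e : R) : Prop := 0 < e /\ e + x * (e * u e) = x.

Lemma fixed_point_iff_solves x e :
  0 < x -> 0 < e -> e = 1 / (1 / x + u e) <-> solves x e.
Proof.
  intros hx he. assert (hue := u_pos e he).
  assert (hd : 0 < 1 / x + u e) by (pose proof (Rdiv_lt_0_compat 1 x Rlt_0_1 hx); lra).
  assert (hsol : e + x * (e * u e) = x * (e * (1 / x + u e))) by (field; lra).
  unfold solves. rewrite hsol. split.
  - intros h. split; [exact he|].
    rewrite h at 1. field. split; nra.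
  - intros [_ h].
    apply (Rmult_eq_reg_r (x * (1 / x + u e))); [|nra].
    replace (1 / (1 / x + u e) * (x * (1 / x + u e))) with x by (field; split; nra).
    lra.
Qed.

Lemma solves_exists x : 0 < x -> exists e, solves x e.
Proof.
  intros hx.
  set (g := fun e => e + x * (e * u e) - x).
  set (lo := x / (2 * (1 + x * u_sup))).
  assert (hsup : 0 < u_sup) by (pose proof (u_pos x hx); pose proof (u_bounded x hx); lra).
  assert (hlo : 0 < lo) by (apply Rdiv_lt_0_compat; nra).
  assert (hlox : lo < x).
  { unfold lo. apply Rlt_le_trans with (x / 1); [|lra].
    apply Rmult_lt_compat_l; [exact hx|]. apply Rinv_lt_contravar; nra. }
  assert (hglo : g lo < 0).
  { assert (hulo := u_bounded lo hlo).
    assert (hlo2 : lo * (1 + x * u_sup) = x / 2) by (unfold lo; field; nra).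
    assert (hxlo : 0 < x * lo) by nra.
    unfold g. nra. }
  assert (hgx : 0 < g x).
  { assert (0 < x * (x * u x)) by (repeat apply Rmult_lt_0_compat; auto).
    unfold g. lra. }
  assert (hcont : forall a, lo <= a <= x -> continuity_pt g a).
  { intros a ha. unfold g. reg.
    apply stable_monotone_continuous; auto; lra. }
  destruct (IVT_interv g lo x hcont hlox hglo hgx) as [e [he hge]].
  exists e. unfold g in hge. split; lra.
Qed.

Lemma solves_lt_1 x e : 0 < x -> solves x e -> e * u e < 1.
Proof. intros hx [he h]. nra. Qed.

Lemma solves_le x y d e : 0 < y -> y <= x -> solves y d -> solves x e -> d <= e.
Proof.
  intros hy hyx hd he.
  assert (hlt := solves_lt_1 y d hy hd).
  destruct hd as [hd0 hd], he as [he0 he].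
  destruct (Rle_lt_dec d e) as [hle|hlt']; [exact hle|].
  (* e = x (1 - e u e) >= y (1 - d u d) = d *)
  destruct (u_mono d e he0 (Rlt_le _ _ hlt')) as [hmono _].
  nra.
Qed.

Lemma solves_unique x d e : 0 < x -> solves x d -> solves x e -> d = e.
Proof.
  intros hx hd he. apply Rle_antisym; eapply solves_le; eauto; lra.
Qed.

Lemma solves_ratio_le x y d e : 0 < y -> y <= x -> solves y d -> solves x e -> y * e <= x * d.
Proof.
  intros hy hyx hd he.
  assert (hde := solves_le x y d e hy hyx hd he).
  destruct hd as [hd0 hd], he as [he0 he].
  destruct (u_mono e d hd0 hde) as [hmono _].
  assert (hid : x * d - y * e
                = x * y * (e * u e - d * u d)
                  + x * (d + y * (d * u d) - y) - y * (e + x * (e * u e) - x)) by ring.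
  rewrite hd, he in hid.
  assert (0 <= x * y * (e * u e - d * u d)) by (apply Rmult_le_pos; nra).
  lra.
Qed.

Definition resolvent (x : R) : R := epsilon (inhabits 0) (solves x).

Lemma resolvent_solves x : 0 < x -> solves x (resolvent x).
Proof. intros hx. unfold resolvent. apply epsilon_spec, solves_exists, hx. Qed.

Lemma resolvent_stable : stable resolvent.
Proof.
  apply stable_iff. split.
  - intros x hx. apply resolvent_solves, hx.
  - intros x y hy hyx.
    assert (hx : 0 < x) by lra.
    assert (hsy := resolvent_solves y hy). assert (hsx := resolvent_solves x hx).
    assert (hle := solves_le x y _ _ hy hyx hsy hsx).
    assert (hry : 0 < resolvent y) by apply hsy.
    split.
    + apply Rmult_le_compat; lra.
    + apply solves_ratio_le; auto.
Qed.

End Resolvent.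

Theorem proposition4 (u : R -> R) (u_inf : R) :
  stable u ->
  0 < u_inf ->
  (forall x, 0 < x -> u x <= u_inf) ->
  (forall x, 0 < x ->
     exists! eta, 0 < eta /\ eta = 1 / (1 / x + u eta)) /\
  (exists eta : R -> R,
     (forall x, 0 < x -> 0 < eta x /\ eta x = 1 / (1 / x + u (eta x))) /\
     stable eta).
Proof.
  intros hstable _ hbounded.
  apply stable_iff in hstable as [hpos hmono].
  split.
  - intros x hx.
    destruct (solves_exists u u_inf hpos hmono hbounded x hx) as [e he].
    exists e. split.
    + split; [apply he | apply fixed_point_iff_solves; auto; apply he].
    + intros e' [he' hfix].
      apply fixed_point_iff_solves in hfix; auto.
      apply (solves_unique u hmono x e e'); auto.
  - exists (resolvent u). split.
    + intros x hx.
      assert (hr := resolvent_solves u u_inf hpos hmono hbounded x hx).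
      split; [apply hr | apply fixed_point_iff_solves; auto; apply hr].
    + apply (resolvent_stable u u_inf); auto.
Qed.
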